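(* Let $A\subseteq\mathbb{R}$ be open, $x\in A$, and $f:A\to\mathbb{R}$ locally Lipschitz. The following are equivalent: (1) $f$ is differentiable at $x$; (2) there exists a unique $m\in\mathbb{R}$ such that ${}^\bullet f(x+h)=f(x)+h\cdot m$ in ${}^\bullet\mathbb{R}$ for all $h\in D$. In this case $m=f'(x)$.
   Context: A function $x:\mathbb{R}\to\mathbb{R}$ is nilpotent if $|x(t)-x(0)|^k=o(t)$ as $t\to0$ for some $k\in\mathbb{N}$; for $A\subseteq\mathbb{R}$, $\mathrm{Nil}(A)$ is the set of nilpotent functions with values in $A$. For such $x,y$, $x\sim y$ iff $x(t)=y(t)+o(t)$ as $t\to0$. ${}^\bullet A:=\mathrm{Nil}(A)/\sim$, identified with a subset of ${}^\bullet\mathbb{R}:=\mathrm{Nil}(\mathbb{R})/\sim$ (a commutative ring under pointwise operations, reals identified with constant functions). For locally Lipschitz $f:A\to\mathbb{R}$, ${}^\bullet f([y]):=[f\circ y]$ on ${}^\bullet A$. $D:=\{h\in{}^\bullet\mathbb{R}:\limsup_{t\to0}|h(t)/t|<+\infty\}$. For $h\in D$ and $x\in A$ open, $x+h\in{}^\bullet A$, so ${}^\bullet f(x+h)$ is defined. *)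

From Stdlib Require Import Reals.
From Coquelicot Require Import Coquelicot.
Open Scope R_scope.

Definition little_o_t (g : R -> R) : Prop :=
  forall eps, 0 < eps -> exists delta, 0 < delta /\
    forall t, 0 < Rabs t < delta -> Rabs (g t) <= eps * Rabs t.

Definition nilpotent (x : R -> R) : Prop :=
  exists k : nat, little_o_t (fun t => (Rabs (x t - x 0)) ^ k).

Definition nil_equiv (x y : R -> R) : Prop :=
  little_o_t (fun t => x t - y t).

(* h (a representative of an element of *R) lies in D:
   h nilpotent and limsup_{t->0} |h(t)/t| < +oo. *)
Definition in_D (h : R -> R) : Prop :=
  nilpotent h /\
  exists C delta, 0 < delta /\
    forall t, 0 < Rabs t < delta -> Rabs (h t / t) <= C.

(* f : A -> R locally Lipschitz (f given on all of R, only its values on A matter). *)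
Definition loc_lipschitz_on (A : R -> Prop) (f : R -> R) : Prop :=
  forall a, A a -> exists eps L, 0 < eps /\
    forall y z, A y -> A z -> Rabs (y - a) < eps -> Rabs (z - a) < eps ->
      Rabs (f y - f z) <= L * Rabs (y - z).

(* Statement (2) for a given m:  *f(x+h) = f(x) + h*m in *R for all h in D. *)
Definition dot_linear (f : R -> R) (x m : R) : Prop :=
  forall h, in_D h -> nil_equiv (fun t => f (x + h t)) (fun t => f x + h t * m).

(* Taking h the identity infinitesimal [t |-> t] in (2) says exactly that
   f(x + t) = f(x) + t m + o(t), i.e. that m is the derivative of f at x;
   uniqueness of m follows because a term t c is o(t) only for c = 0.
   Conversely, every h in D satisfies |h(t)| <= C |t| near 0, so composing
   the first-order expansion of f at x with h keeps the remainder o(t). *)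

From Stdlib Require Import Reals Lra.
From Coquelicot Require Import Coquelicot.
Open Scope R_scope.

Lemma little_o_t_minus (g1 g2 : R -> R) :
  little_o_t g1 -> little_o_t g2 -> little_o_t (fun t => g1 t - g2 t).
Proof.
  intros H1 H2 eps Heps.
  destruct (H1 (eps / 2) ltac:(lra)) as [d1 [Hd1 Hg1]].
  destruct (H2 (eps / 2) ltac:(lra)) as [d2 [Hd2 Hg2]].
  exists (Rmin d1 d2); split; [now apply Rmin_glb_lt|].
  intros t [Ht0 Ht].
  specialize (Hg1 t (conj Ht0 (Rlt_le_trans _ _ _ Ht (Rmin_l _ _)))).
  specialize (Hg2 t (conj Ht0 (Rlt_le_trans _ _ _ Ht (Rmin_r _ _)))).
  eapply Rle_trans; [apply Rabs_triang|]. rewrite Rabs_Ropp. lra.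
Qed.

Lemma little_o_t_linear_eq0 (c : R) : little_o_t (fun t => t * c) -> c = 0.
Proof.
  intros Ho. destruct (Req_dec c 0) as [|Hc]; [easy|exfalso].
  assert (Hc0 : 0 < Rabs c) by now apply Rabs_pos_lt.
  destruct (Ho (Rabs c / 2) ltac:(lra)) as [d [Hd Hg]].
  specialize (Hg (d / 2)). rewrite Rabs_mult, (Rabs_pos_eq (d / 2)) in Hg by lra.
  assert (Hbound : d / 2 * Rabs c <= Rabs c / 2 * (d / 2)) by (apply Hg; lra).
  nra.
Qed.

(* The remainder bound also holds at [u = 0], which matters when composing
   with an infinitesimal [h] that vanishes at some [t <> 0]. *)
Lemma derivable_pt_lim_remainder (f : R -> R) (x l : R) :
  derivable_pt_lim f x l ->
  forall eps, 0 < eps -> exists d, 0 < d /\ forall u, Rabs u < d ->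
    Rabs (f (x + u) - (f x + u * l)) <= eps * Rabs u.
Proof.
  intros Hl eps Heps. destruct (Hl eps Heps) as [[d Hd] Hq].
  exists d; split; [easy|]. intros u Hu.
  destruct (Req_dec u 0) as [->|Hu0].
  - rewrite Rplus_0_r, Rmult_0_l, Rplus_0_r, Rminus_diag, !Rabs_R0. lra.
  - replace (f (x + u) - (f x + u * l)) with (((f (x + u) - f x) / u - l) * u)
      by (field; easy).
    rewrite Rabs_mult. apply Rmult_le_compat_r; [apply Rabs_pos|].
    left; now apply Hq.
Qed.

Lemma little_o_t_derivable_pt_lim (f : R -> R) (x m : R) :
  little_o_t (fun t => f (x + t) - (f x + t * m)) -> derivable_pt_lim f x m.
Proof.
  intros Ho eps Heps. destruct (Ho (eps / 2) ltac:(lra)) as [d [Hd Hg]].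
  exists (mkposreal d Hd). intros u Hu0 Hu. simpl in Hu.
  assert (Hau : 0 < Rabs u) by now apply Rabs_pos_lt.
  specialize (Hg u (conj Hau Hu)).
  replace ((f (x + u) - f x) / u - m) with ((f (x + u) - (f x + u * m)) / u)
    by (field; easy).
  unfold Rdiv. rewrite Rabs_mult, Rabs_inv.
  apply Rle_lt_trans with (eps / 2 * Rabs u * / Rabs u).
  - apply Rmult_le_compat_r; [left; now apply Rinv_0_lt_compat | easy].
  - field_simplify; lra.
Qed.

Lemma in_D_id : in_D (fun t => t).
Proof.
  split.
  - exists 2%nat. intros eps Heps. exists eps; split; [easy|].
    intros t [Ht0 Ht]. rewrite Rminus_0_r; simpl. rewrite Rmult_1_r, Rabs_mult, Rabs_Rabsolu.
    apply Rmult_le_compat_r; lra.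
  - exists 1, 1; split; [lra|]. intros t [Ht0 _].
    assert (t <> 0) by (intros ->; rewrite Rabs_R0 in Ht0; lra).
    unfold Rdiv; rewrite Rinv_r, Rabs_R1 by easy. lra.
Qed.

Lemma in_D_linear_bound (h : R -> R) : in_D h ->
  exists C d, 0 < C /\ 0 < d /\ forall t, 0 < Rabs t < d -> Rabs (h t) <= C * Rabs t.
Proof.
  intros [_ [C [d [Hd HC]]]]. exists (Rabs C + 1), d.
  split; [pose proof (Rabs_pos C); lra|]. split; [easy|].
  intros t Ht.
  assert (t <> 0) by (intros ->; rewrite Rabs_R0 in Ht; lra).
  replace (h t) with (h t / t * t) by (field; easy).
  rewrite Rabs_mult. apply Rmult_le_compat_r; [apply Rabs_pos|].
  pose proof (Rle_abs C). specialize (HC t Ht). lra.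
Qed.

Lemma little_o_comp_linear_bound (g h : R -> R) (C d0 : R) :
  0 < C -> 0 < d0 ->
  (forall t, 0 < Rabs t < d0 -> Rabs (h t) <= C * Rabs t) ->
  (forall eps, 0 < eps -> exists d, 0 < d /\
     forall u, Rabs u < d -> Rabs (g u) <= eps * Rabs u) ->
  little_o_t (fun t => g (h t)).
Proof.
  intros HC Hd0 Hh Hg eps Heps.
  destruct (Hg (eps / C) ltac:(apply Rdiv_lt_0_compat; lra)) as [eta [Heta Hgeta]].
  exists (Rmin d0 (eta / C)); split.
  { apply Rmin_glb_lt; [easy|apply Rdiv_lt_0_compat; lra]. }
  intros t [Ht0 Ht].
  assert (Hht : Rabs (h t) <= C * Rabs t)
    by (apply Hh; split; [easy|eapply Rlt_le_trans; [exact Ht|apply Rmin_l]]).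
  assert (Hsmall : C * Rabs t < eta).
  { pose proof (Rmin_r d0 (eta / C)).
    replace eta with (C * (eta / C)) by (field; lra).
    apply Rmult_lt_compat_l; lra. }
  eapply Rle_trans; [apply Hgeta; lra|].
  apply Rle_trans with (eps / C * (C * Rabs t)).
  - apply Rmult_le_compat_l; [left; apply Rdiv_lt_0_compat; lra|easy].
  - right; field; lra.
Qed.

Lemma derivable_pt_lim_dot_linear (f : R -> R) (x l : R) :
  derivable_pt_lim f x l -> dot_linear f x l.
Proof.
  intros Hl h Hh.
  destruct (in_D_linear_bound h Hh) as [C [d [HC [Hd Hbound]]]].
  exact (little_o_comp_linear_bound (fun u => f (x + u) - (f x + u * l)) h C d
           HC Hd Hbound (derivable_pt_lim_remainder f x l Hl)).
Qed.

Lemma dot_linear_derivable_pt_lim (f : R -> R) (x m : R) :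
  dot_linear f x m -> derivable_pt_lim f x m.
Proof.
  intros Hm. apply little_o_t_derivable_pt_lim. exact (Hm _ in_D_id).
Qed.

Lemma dot_linear_unique (f : R -> R) (x m m' : R) :
  dot_linear f x m -> dot_linear f x m' -> m = m'.
Proof.
  intros Hm Hm'.
  pose proof (little_o_t_minus _ _ (Hm' _ in_D_id) (Hm _ in_D_id)) as Hdiff.
  assert (Hlin : little_o_t (fun t => t * (m - m'))).
  { intros eps Heps. destruct (Hdiff eps Heps) as [d [Hd Hg]].
    exists d; split; [easy|]. intros t Ht.
    replace (t * (m - m')) with
      (f (x + t) - (f x + t * m') - (f (x + t) - (f x + t * m))) by ring.
    now apply Hg. }
  apply little_o_t_linear_eq0 in Hlin. lra.
Qed.

(* The hypotheses on [A] are what make *f well defined in the paper; here [f]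
   is total, so the proof does not need them. *)
Theorem mainTheorem11 (A : R -> Prop) (f : R -> R) (x : R) :
  open_set A -> A x -> loc_lipschitz_on A f ->
  (ex_derive f x <-> exists! m : R, dot_linear f x m) /\
  (ex_derive f x -> dot_linear f x (Derive f x)).
Proof.
  intros _ _ _.
  assert (Hderive : ex_derive f x -> dot_linear f x (Derive f x)).
  { intros [l Hl]. rewrite (is_derive_unique f x l Hl).
    now apply derivable_pt_lim_dot_linear, is_derive_Reals. }
  split; [split|exact Hderive].
  - intros Hex. exists (Derive f x). split; [now apply Hderive|].
    intros m' Hm'. apply (dot_linear_unique f x); [now apply Hderive|exact Hm'].
  - intros [m [Hm _]]. exists m.
    now apply is_derive_Reals, dot_linear_derivable_pt_lim.
Qed.
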